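(* For any integer $n\geq 2$ and positive numbers $V, L, \epsilon$, there is a universal constant $C>0$ such that $$\log\mathcal{N}(\mathcal{T}_{n,n,V,L},\epsilon) \leq C\log n\,\log\Big(1 + \frac{2Ln}{\epsilon}\Big)\max\Big\{\frac{V^2\log n}{\epsilon^2},1\Big\}.$$
   Context: $\mathcal{T}_{m,n,V,L} = \{\theta\in\mathbb{R}^{m\times n}: \mathrm{TV}(\theta)\le V,\ \|\theta\|_\infty\le L\}$, where $\mathrm{TV}(\theta)$ is the unnormalized total variation, i.e. the sum of $|\theta_u-\theta_v|$ over all pairs $u,v$ of horizontally or vertically adjacent entries, and $\|\theta\|_\infty$ is the maximum absolute entry. $\mathcal{N}(A,\epsilon)$ is the minimal number of Euclidean (Frobenius) balls of radius $\epsilon$ needed to cover $A$. *)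

From HB Require Import structures.
From mathcomp Require Import all_boot all_order all_algebra.
From mathcomp Require Import boolp classical_sets reals exp.
Set Implicit Arguments. Unset Strict Implicit. Unset Printing Implicit Defensive.
Import Order.TTheory GRing.Theory Num.Theory.
Local Open Scope ring_scope.
Local Open Scope classical_set_scope.

Section Defs.
Variable R : realType.

(* Unnormalized anisotropic total variation: sum of |theta_u - theta_v| over
   all (unordered) pairs of horizontally or vertically adjacent entries. *)
Definition TV (m n : nat) (theta : 'M[R]_(m, n)) : R :=
  \sum_(i : 'I_m) \sum_(j : 'I_n) \sum_(j' : 'I_n | j.+1 == j')
      `|theta i j - theta i j'|
  + \sum_(i : 'I_m) \sum_(i' : 'I_m | i.+1 == i') \sum_(j : 'I_n)
      `|theta i j - theta i' j|.

Definition linf (m n : nat) (theta : 'M[R]_(m, n)) : R :=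
  \big[Order.max/0]_(i : 'I_m) \big[Order.max/0]_(j : 'I_n) `|theta i j|.

Definition frob_dist (m n : nat) (a b : 'M[R]_(m, n)) : R :=
  Num.sqrt (\sum_(i : 'I_m) \sum_(j : 'I_n) (a i j - b i j) ^+ 2).

Definition TVclass (m n : nat) (V L : R) : set 'M[R]_(m, n) :=
  [set theta | TV theta <= V /\ linf theta <= L].

Definition is_cover (m n : nat) (A : set 'M[R]_(m, n)) (eps : R)
    (s : seq 'M[R]_(m, n)) : Prop :=
  forall theta, A theta -> exists2 c, c \in s & frob_dist theta c <= eps.

Definition has_cover_of_size (m n : nat) (A : set 'M[R]_(m, n)) (eps : R)
    : pred nat :=
  fun k => `[< exists s : seq 'M[R]_(m, n), size s = k /\ is_cover A eps s >].

(* Covering number N(A, eps): minimal number of balls; 0 if no finite cover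
   exists (never the case for the bounded sets considered here). *)
Definition covering_number (m n : nat) (A : set 'M[R]_(m, n)) (eps : R) : nat :=
  match pselect (exists k, has_cover_of_size A eps k) with
  | left h => ex_minn h
  | right _ => 0%N
  end.

End Defs.

(* A matrix of total variation at most V is approximated by a function that is
   constant on the rectangles of an adaptive dyadic partition: a near-square
   rectangle whose variation exceeds t = eps^2 / (16 V) is cut into its four
   quadrants.  After log2 n + 1 generations every piece has variation at most t,
   and since every cut is paid for by a variation larger than t, there are at
   most 1 + 48 (log2 n + 2) V^2 / eps^2 pieces.  On a near-square rectangle of
   variation T some entry c satisfies sum (theta - c)^2 <= 4 T^2, a discrete
   Poincare inequality obtained by averaging over all pairs of entries and
   bounding each difference by row and column variations.  Rounding these
   constants to the grid -L + k eps / (2 n) and encoding each piece by its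
   corners and its level gives at most ((n + 2)^4 M)^m centers, with
   M ~ 4 L n / eps levels and m pieces; taking logarithms gives the bound. *)

From HB Require Import structures.
From mathcomp Require Import all_boot all_order all_algebra.
From mathcomp Require Import boolp classical_sets reals exp.
From mathcomp Require Import zify ring lra.
Import Order.TTheory GRing.Theory Num.Theory.

Record rect := Rect { row_lo : nat; row_hi : nat; col_lo : nat; col_hi : nat }.

Definition rect_tuple q := (row_lo q, row_hi q, col_lo q, col_hi q).
Definition tuple_rect (x : nat * nat * nat * nat) := let: (a, b, c, d) := x in Rect a b c d.
Lemma rect_tupleK : cancel rect_tuple tuple_rect. Proof. by case. Qed.
HB.instance Definition _ := Equality.copy rect (can_type rect_tupleK).

Definition rows q := row_hi q - row_lo q.
Definition cols q := col_hi q - col_lo q.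

Definition in_rect q i j := (row_lo q <= i < row_hi q) && (col_lo q <= j < col_hi q).

Definition subrect p q :=
  [&& row_lo q <= row_lo p, row_hi p <= row_hi q, col_lo q <= col_lo p & col_hi p <= col_hi q].

Lemma subrect_refl q : subrect q q.
Proof. by rewrite /subrect !leqnn. Qed.

Lemma subrect_trans {p q r} : subrect p q -> subrect q r -> subrect p r.
Proof. by rewrite /subrect; lia. Qed.

Definition near_square q :=
  [&& row_lo q <= row_hi q, col_lo q <= col_hi q, rows q <= (cols q).+1 & cols q <= (rows q).+1].

Definition quadrants q :=
  let rm := (row_lo q + row_hi q) %/ 2 in let cm := (col_lo q + col_hi q) %/ 2 in
  [:: Rect (row_lo q) rm (col_lo q) cm; Rect (row_lo q) rm cm (col_hi q);
      Rect rm (row_hi q) (col_lo q) cm; Rect rm (row_hi q) cm (col_hi q)].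

Lemma quadrants_cover q i j :
  in_rect q i j -> has (fun p => in_rect p i j) (quadrants q).
Proof. by rewrite /= /in_rect /=; lia. Qed.

Lemma quadrant_sub {p q} : near_square q -> p \in quadrants q -> subrect p q.
Proof. by rewrite /near_square !inE => + /or4P[]/eqP->; rewrite /subrect /=; lia. Qed.

Lemma quadrant_near_square {p q} : near_square q -> p \in quadrants q -> near_square p.
Proof.
by rewrite /near_square /rows /cols !inE => + /or4P[]/eqP->; rewrite /=; lia.
Qed.

Lemma quadrant_dims_le {p q s} : p \in quadrants q ->
  rows q <= s.*2 -> cols q <= s.*2 -> (rows p <= s) && (cols p <= s).
Proof. by rewrite /rows /cols !inE => /or4P[]/eqP->; rewrite /=; lia. Qed.

Local Open Scope ring_scope.

Section Sums.
Context {R : realDomainType}.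

Lemma psumr_nat_le_cond (F : nat -> R) a b a' b' (P P' : pred nat) :
  (forall k, 0 <= F k) -> (a' <= a)%N -> (b <= b')%N ->
  (forall k, (a <= k < b)%N -> P k -> P' k) ->
  \sum_(a <= k < b | P k) F k <= \sum_(a' <= k < b' | P' k) F k.
Proof.
move=> F0 a'a bb' PP'; case: (leqP a b) => ab; last by rewrite big_geq ?sumr_ge0 // ltnW.
have pos c d : 0 <= \sum_(c <= k < d | P' k) F k by exact: sumr_ge0.
rewrite (big_cat_nat a'a (leq_trans ab bb')) (big_cat_nat ab bb') /=.
have : \sum_(a <= k < b | P k) F k <= \sum_(a <= k < b | P' k) F k.
  rewrite big_mkcond [leRHS]big_mkcond /=; apply: ler_sum_nat => k /PP'.
  by case: (P k) => [->|_] //; case: (P' k).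
by move: (pos a' a) (pos b b'); lra.
Qed.

Lemma ler_sum_mem (I : eqType) (s : seq I) (P : pred I) (F : I -> R) x :
  x \in s -> P x -> (forall y, P y -> 0 <= F y) -> F x <= \sum_(y <- s | P y) F y.
Proof.
move=> xs Px F0; rewrite (perm_big _ (perm_to_rem xs)) big_cons Px lerDl.
exact: sumr_ge0.
Qed.

Lemma exists_le_mean2 (F : nat -> nat -> R) r0 r1 c0 c1 (B : R) :
  (r0 < r1)%N -> (c0 < c1)%N ->
  \sum_(r0 <= i < r1) \sum_(c0 <= j < c1) F i j <= ((r1 - r0) * (c1 - c0))%:R * B ->
  exists i j, [/\ (r0 <= i < r1)%N, (c0 <= j < c1)%N & F i j <= B].
Proof.
move=> r01 c01 hsum; apply/not_existsP => hgt; move: hsum; apply/negP; rewrite -ltNge.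
rewrite mulr_natl mulnC mulrnA -!sumr_const_nat.
apply: ltr_sum_nat => // i hi; apply: ltr_sum_nat => // j hj.
by rewrite ltNge; apply/negP => hle; apply: (hgt i); exists j; split.
Qed.

End Sums.

Section Variation.
Context {R : realDomainType}.
Implicit Types u : nat -> R.

Definition tv1 u (a b : nat) : R :=
  \sum_(a <= k < b | (k.+1 < b)%N) `|u k - u k.+1|.

Lemma tv1_ge0 u a b : 0 <= tv1 u a b.
Proof. exact: sumr_ge0. Qed.

Lemma tv1_short u a b : (b <= a.+1)%N -> tv1 u a b = 0.
Proof.
move=> ba; rewrite /tv1 big_nat_cond big_pred0 // => k.
by apply/negP => /andP[/andP[ak _] kb]; lia.
Qed.

Lemma tv1_split u a m b : (a <= m <= b)%N -> tv1 u a m + tv1 u m b <= tv1 u a b.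
Proof.
move=> /andP[am mb]; rewrite /tv1 (big_cat_nat am mb) /=.
by apply: lerD; apply: psumr_nat_le_cond => // k; lia.
Qed.

Lemma dist_le_tv1 u a b j l :
  (a <= j < b)%N -> (a <= l < b)%N -> `|u j - u l| <= tv1 u a b.
Proof.
wlog jl : j l / (j <= l)%N.
  move=> W hj hl; case: (leqP j l) => jl; first exact: W.
  by rewrite distrC W // ltnW.
move=> hj hl; rewrite distrC -telescope_sumr //.
apply: le_trans (ler_norm_sum _ _ _) _.
under eq_bigr do rewrite distrC.
by apply: psumr_nat_le_cond => [k|||k + _]; [exact: normr_ge0|lia..].
Qed.

End Variation.

Section RectVariation.
Context {R : realFieldType}.
Variable f : nat -> nat -> R.
Implicit Types (p q : rect) (c : R).

Definition row_tv q i := tv1 (f i) (col_lo q) (col_hi q).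
Definition col_tv q j := tv1 (f^~ j) (row_lo q) (row_hi q).

Definition rect_tv q :=
  \sum_(row_lo q <= i < row_hi q) row_tv q i + \sum_(col_lo q <= j < col_hi q) col_tv q j.

Definition rect_sqerr q c :=
  \sum_(row_lo q <= i < row_hi q) \sum_(col_lo q <= j < col_hi q) (f i j - c) ^+ 2.

Lemma rect_tv_ge0 q : 0 <= rect_tv q.
Proof. by rewrite addr_ge0 //; apply: sumr_ge0 => *; apply: tv1_ge0. Qed.

Lemma rect_tv_short q : (rows q <= 1)%N -> (cols q <= 1)%N -> rect_tv q = 0.
Proof.
rewrite /rows /cols => r1 c1; rewrite /rect_tv !big1 ?addr0 // => *;
  by rewrite /row_tv /col_tv tv1_short //; lia.
Qed.

Lemma rect_tv_quadrants q : near_square q ->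
  \sum_(p <- quadrants q) rect_tv p <= rect_tv q.
Proof.
case/and4P=> r01 c01 _ _; rewrite !big_cons big_nil addr0 /rect_tv /row_tv /col_tv /=.
set rm := ((row_lo q + row_hi q) %/ 2)%N; set cm := ((col_lo q + col_hi q) %/ 2)%N.
have [r0m rm1] : (row_lo q <= rm)%N /\ (rm <= row_hi q)%N by split; lia.
have [c0m cm1] : (col_lo q <= cm)%N /\ (cm <= col_hi q)%N by split; lia.
rewrite (big_cat_nat r0m rm1) (big_cat_nat c0m cm1) /=.
have split_rows a b : \sum_(a <= i < b) tv1 (f i) (col_lo q) cm
      + \sum_(a <= i < b) tv1 (f i) cm (col_hi q)
    <= \sum_(a <= i < b) tv1 (f i) (col_lo q) (col_hi q).
  by rewrite -big_split; apply: ler_sum => i _; apply: tv1_split; rewrite c0m.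
have split_cols a b : \sum_(a <= j < b) tv1 (f^~ j) (row_lo q) rm
      + \sum_(a <= j < b) tv1 (f^~ j) rm (row_hi q)
    <= \sum_(a <= j < b) tv1 (f^~ j) (row_lo q) (row_hi q).
  by rewrite -big_split; apply: ler_sum => j _; apply: tv1_split; rewrite r0m.
move: (split_rows (row_lo q) rm) (split_rows rm (row_hi q)).
move: (split_cols (col_lo q) cm) (split_cols cm (col_hi q)); lra.
Qed.

(* Each factor bounds |f i j - f k l|, along the paths through (i, l) and (k, j). *)
Lemma sqr_diff_le_row_col_tv q i j k l : in_rect q i j -> in_rect q k l ->
  (f i j - f k l) ^+ 2 <= (row_tv q i + col_tv q l) * (col_tv q j + row_tv q k).
Proof.
move=> /andP[hi hj] /andP[hk hl]; rewrite -real_normK ?num_real // expr2.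
apply: ler_pM; rewrite ?normr_ge0 //.
  rewrite -(subrKA (f i l)); apply: le_trans (ler_normD _ _) (lerD _ _).
    exact: dist_le_tv1.
  exact: (dist_le_tv1 (f^~ l)).
rewrite -(subrKA (f k j)); apply: le_trans (ler_normD _ _) (lerD _ _).
  exact: (dist_le_tv1 (f^~ j)).
exact: dist_le_tv1.
Qed.

Lemma near_square_sqr_le (a b G H : R) :
  1 <= a -> 1 <= b -> a <= b + 1 -> b <= a + 1 -> 0 <= G -> 0 <= H ->
  (b * G + a * H) ^+ 2 <= 4 * (a * b) * (G + H) ^+ 2.
Proof.
move=> a1 b1 ab ba G0 H0.
have : (b * G + a * H) ^+ 2 <= 2 * (b * b) * G ^+ 2 + 2 * (a * a) * H ^+ 2.
  by have := sqr_ge0 (b * G - a * H); nra.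
have : b * b * G ^+ 2 <= 2 * (a * b) * G ^+ 2 by apply: ler_wpM2r; nra.
have : a * a * H ^+ 2 <= 2 * (a * b) * H ^+ 2 by apply: ler_wpM2r; nra.
have : 0 <= a * b * (G * H) by apply: mulr_ge0; nra.
nra.
Qed.

Lemma sum_rect_sqerr_le q :
  \sum_(row_lo q <= k < row_hi q) \sum_(col_lo q <= l < col_hi q) rect_sqerr q (f k l)
  <= ((cols q)%:R * \sum_(row_lo q <= i < row_hi q) row_tv q i
      + (rows q)%:R * \sum_(col_lo q <= j < col_hi q) col_tv q j) ^+ 2.
Proof.
set G := \sum_(row_lo q <= i < row_hi q) row_tv q i.
set H := \sum_(col_lo q <= j < col_hi q) col_tv q j.
set a : R := (rows q)%:R; set b : R := (cols q)%:R.
have inner k l : \sum_(row_lo q <= i < row_hi q) \sum_(col_lo q <= j < col_hi q)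
    (row_tv q i + col_tv q l) * (col_tv q j + row_tv q k)
    = (G + a * col_tv q l) * (H + b * row_tv q k).
  have -> : G + a * col_tv q l = \sum_(row_lo q <= i < row_hi q) (row_tv q i + col_tv q l).
    by rewrite big_split sumr_const_nat /a mulr_natl.
  have -> : H + b * row_tv q k = \sum_(col_lo q <= j < col_hi q) (col_tv q j + row_tv q k).
    by rewrite big_split sumr_const_nat /b mulr_natl.
  by rewrite mulr_suml; apply: eq_bigr => i _; rewrite mulr_sumr.
have outer : \sum_(row_lo q <= k < row_hi q) \sum_(col_lo q <= l < col_hi q)
    (G + a * col_tv q l) * (H + b * row_tv q k) = (b * G + a * H) ^+ 2.
  have sum_l : \sum_(col_lo q <= l < col_hi q) (G + a * col_tv q l) = b * G + a * H.
    by rewrite big_split sumr_const_nat -mulr_sumr /b mulr_natl.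
  have sum_k : \sum_(row_lo q <= k < row_hi q) (H + b * row_tv q k) = a * H + b * G.
    by rewrite big_split sumr_const_nat -mulr_sumr /a mulr_natl.
  rewrite (eq_bigr (fun k => (b * G + a * H) * (H + b * row_tv q k))) => [|k _].
    by rewrite -mulr_sumr sum_k addrC expr2.
  by rewrite -mulr_suml sum_l.
rewrite -outer; apply: ler_sum_nat => k hk; apply: ler_sum_nat => l hl.
rewrite -inner; apply: ler_sum_nat => i hi; apply: ler_sum_nat => j hj.
by apply: sqr_diff_le_row_col_tv; apply/andP.
Qed.

Lemma near_square_poincare q : near_square q -> (0 < rows q)%N -> (0 < cols q)%N ->
  exists i j, in_rect q i j /\ rect_sqerr q (f i j) <= 4 * rect_tv q ^+ 2.
Proof.
move=> /and4P[_ _ rc cr] r0 c0.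
have G0 : 0 <= \sum_(row_lo q <= i < row_hi q) row_tv q i.
  by apply: sumr_ge0 => *; apply: tv1_ge0.
have H0 : 0 <= \sum_(col_lo q <= j < col_hi q) col_tv q j.
  by apply: sumr_ge0 => *; apply: tv1_ge0.
have [i [j [hi hj hle]]] : exists i j, [/\ (row_lo q <= i < row_hi q)%N,
    (col_lo q <= j < col_hi q)%N & rect_sqerr q (f i j) <= 4 * rect_tv q ^+ 2].
  apply: (exists_le_mean2 (fun i j => rect_sqerr q (f i j))); [by rewrite -subn_gt0..|].
  apply: le_trans (sum_rect_sqerr_le q) _; rewrite natrM mulrCA mulrA.
  by apply: near_square_sqr_le; rewrite ?natr1 ?ler_nat ?ler1n.
by exists i, j; split => //; apply/andP.
Qed.

Lemma exists_bounded_const (L : R) q :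
    0 <= L -> (forall i j, `|f i j| <= L) -> near_square q ->
  exists2 c, `|c| <= L & rect_sqerr q c <= 4 * rect_tv q ^+ 2.
Proof.
move=> L0 fL nsq; have [/andP[r0 c0]|empty] := boolP ((0 < rows q) && (0 < cols q))%N.
  by have [i [j [_ ?]]] := near_square_poincare q nsq r0 c0; exists (f i j).
exists 0; rewrite ?normr0 //.
suff -> : rect_sqerr q 0 = 0 by rewrite mulr_ge0 ?sqr_ge0.
move: empty; rewrite /rect_sqerr /rows /cols negb_and -!leqNgt !leqn0 !subn_eq0.
case/orP=> [rq|cq]; first by rewrite big_geq.
by rewrite big1 // => i _; rewrite big_geq.
Qed.

Definition fine_cover (t : R) q (P : seq rect) :=
  [/\ forall i j, in_rect q i j -> has (fun p => in_rect p i j) P,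
      all (fun p => [&& near_square p, subrect p q & rect_tv p <= t]) P &
      \sum_(p <- P) rect_tv p <= rect_tv q].

Lemma fine_cover1 (t : R) q : near_square q -> rect_tv q <= t -> fine_cover t q [:: q].
Proof.
move=> nsq qt; split; first by move=> i j /= ->.
  by rewrite /= nsq subrect_refl qt.
by rewrite big_seq1.
Qed.

Lemma fine_cover_flatten (t : R) q (Q : seq rect) (F : rect -> seq rect) :
  (forall i j, in_rect q i j -> has (fun p => in_rect p i j) Q) ->
  {in Q, forall p, subrect p q} ->
  \sum_(p <- Q) rect_tv p <= rect_tv q ->
  {in Q, forall p, fine_cover t p (F p)} ->
  fine_cover t q (flatten (map F Q)).
Proof.
move=> coverQ subQ sumQ fineF; split.
- move=> i j /coverQ /hasP[p pQ pij]; have [coverF _ _] := fineF p pQ.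
  have /hasP[x xF xij] := coverF i j pij.
  by apply/hasP; exists x => //; apply/flatten_mapP; exists p.
- apply/allP => x /flatten_mapP[p pQ xF].
  have [_ /allP/(_ x xF)/and3P[-> xp ->] _] := fineF p pQ.
  by rewrite (subrect_trans xp (subQ p pQ)).
- rewrite big_flatten big_map /=; apply: le_trans sumQ.
  by rewrite big_seq [leRHS]big_seq; apply: ler_sum => p /fineF[].
Qed.

(* A rectangle is split only when its variation exceeds t, which pays for the
   three extra pieces. *)
Lemma exists_fine_cover (t : R) d q : 0 < t -> near_square q ->
    (rows q <= 2 ^ d)%N -> (cols q <= 2 ^ d)%N ->
  exists P, fine_cover t q P /\ (size P)%:R * t <= t + 3 * d.+1%:R * rect_tv q.
Proof.
move=> t0; elim: d q => [|d IH] q nsq hr hc.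
  exists [:: q]; rewrite rect_tv_short // mulr0 addr0 mul1r.
  by split=> //; apply: fine_cover1 => //; rewrite rect_tv_short ?ltW.
have tv0 := rect_tv_ge0 q.
have [qt|tq] := leP (rect_tv q) t.
  exists [:: q]; split; first exact: fine_cover1.
  by rewrite mul1r lerDl !mulr_ge0 ?ler0n.
have sub_covers p : exists P, p \in quadrants q ->
    fine_cover t p P /\ (size P)%:R * t <= t + 3 * d.+1%:R * rect_tv p.
  have [pq|] := boolP (p \in quadrants q); last by exists [::].
  have /andP[hr' hc'] : (rows p <= 2 ^ d)%N && (cols p <= 2 ^ d)%N.
    by apply: (quadrant_dims_le (s := 2 ^ d) pq); rewrite -mul2n -expnS.
  by have [P ?] := IH p (quadrant_near_square nsq pq) hr' hc'; exists P.
have [F fineF] := choice sub_covers.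
exists (flatten (map F (quadrants q))); split.
  apply: fine_cover_flatten => //; last by move=> p /fineF[].
  - exact: quadrants_cover.
  - by move=> p; apply: quadrant_sub.
  - exact: rect_tv_quadrants.
rewrite size_flatten sumnE big_map natr_sum big_map mulr_suml.
apply: (@le_trans _ _ (\sum_(p <- quadrants q) (t + 3 * d.+1%:R * rect_tv p))).
  by rewrite big_seq [leRHS]big_seq; apply: ler_sum => p /fineF[].
have sum_t : \sum_(p <- quadrants q) t = 4 * t by rewrite !big_cons big_nil; ring.
have D0 : 0 <= d.+1%:R :> R by [].
rewrite big_split /= -mulr_sumr sum_t -natr1.
by have := rect_tv_quadrants q nsq; nra.
Qed.

Lemma fine_cover_sqerr (t : R) q P (c : rect -> R) : 0 <= t -> fine_cover t q P ->
  {in P, forall p, rect_sqerr p (c p) <= 4 * rect_tv p ^+ 2} ->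
  \sum_(p <- P) rect_sqerr p (c p) <= 4 * t * rect_tv q.
Proof.
move=> t0 [_ /allP Pt Psum] hc.
have sumP : 4 * t * \sum_(p <- P) rect_tv p <= 4 * t * rect_tv q.
  by apply: ler_wpM2l; rewrite ?mulr_ge0.
apply: le_trans _ sumP; rewrite mulr_sumr big_seq [leRHS]big_seq; apply: ler_sum => p pP.
apply: le_trans (hc p pP) _; have /and3P[_ _ pt] := Pt p pP.
by have := rect_tv_ge0 p; nra.
Qed.

End RectVariation.

Definition grid_rect k := Rect 0 k 0 k.

Lemma near_square_grid k : near_square (grid_rect k).
Proof. by rewrite /near_square /rows /cols /=; lia. Qed.

Lemma in_grid_rect k (i j : 'I_k) : in_rect (grid_rect k) i j.
Proof. by rewrite /in_rect /= !ltn_ord. Qed.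

Lemma normr_le_linf {R : realType} m n (A : 'M[R]_(m, n)) i j : `|A i j| <= linf A.
Proof. exact: le_trans (le_bigmax _ (fun j => `|A i j|) j) (le_bigmax _ _ i). Qed.

Section Grid.
Context {R : realType} {n : nat}.
Local Notation N := n.+1.
Implicit Types (A theta : 'M[R]_N) (p : rect).

Definition grid_fun A i j := A (inord i) (inord j).

Lemma grid_fun_ord A (i j : 'I_N) : grid_fun A i j = A i j.
Proof. by rewrite /grid_fun !inord_val. Qed.

Lemma grid_fun_bound A L : linf A <= L -> forall i j, `|grid_fun A i j| <= L.
Proof. by move=> AL i j; apply: le_trans AL; apply: normr_le_linf. Qed.

Lemma sum_succ_ord (F : 'I_N -> R) (j : nat) :
  \sum_(j' : 'I_N | j.+1 == j') F j' = if (j.+1 < N)%N then F (inord j.+1) else 0.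
Proof.
case: ifP => jN.
  rewrite (big_pred1 (Ordinal jN)) => [|k]; last by rewrite /= -val_eqE /= eq_sym.
  by congr F; apply/val_inj; rewrite /= inordK.
rewrite big_pred0 // => k; apply/negbTE/eqP => jk.
by move: (ltn_ord k); rewrite -jk jN.
Qed.

Lemma rect_tv_grid A : rect_tv (grid_fun A) (grid_rect N) = TV A.
Proof.
rewrite /rect_tv /TV /row_tv /col_tv /tv1 /=; congr (_ + _).
  rewrite big_mkord; apply: eq_bigr => i _; rewrite big_mkord big_mkcond /=.
  apply: eq_bigr => j _; rewrite (sum_succ_ord (fun j' => `|A i j - A i j'|)).
  by case: ifP => // _; rewrite /grid_fun !inord_val.
rewrite big_mkord; under [RHS]eq_bigr do rewrite exchange_big.
rewrite [RHS]exchange_big; apply: eq_bigr => j _; rewrite big_mkord big_mkcond /=.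
apply: eq_bigr => i _; rewrite (sum_succ_ord (fun i' => `|A i j - A i' j|)).
by case: ifP => // _; rewrite /grid_fun !inord_val.
Qed.

Lemma sum_nat_range (F : nat -> R) a b :
  (a <= b <= N)%N -> \sum_(i < N | (a <= i < b)%N) F i = \sum_(a <= i < b) F i.
Proof.
move=> /andP[ab bN]; rewrite (big_nat_widen _ _ _ _ _ bN) (big_nat_widenl _ _ _ _ _ (leq0n a)).
by rewrite big_mkord; apply: eq_bigl => i; rewrite andbC.
Qed.

Lemma sum_in_rect (F : nat -> nat -> R) p : near_square p -> subrect p (grid_rect N) ->
  \sum_(i < N) \sum_(j < N | in_rect p i j) F i j
  = \sum_(row_lo p <= i < row_hi p) \sum_(col_lo p <= j < col_hi p) F i j.
Proof.
move=> /and4P[rp cp _ _] /and4P[_ rN _ cN].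
rewrite -sum_nat_range ?rp // [RHS]big_mkcond; apply: eq_bigr => i _.
rewrite /in_rect; case: ifP => ri; last by rewrite big_pred0.
by rewrite -sum_nat_range ?cp.
Qed.

Lemma sqdist_le_piecewise theta {A} {P : seq rect} {v c : rect -> R} {del : R} :
  {in P, forall p, near_square p && subrect p (grid_rect N)} ->
  (forall i j : 'I_N, exists2 p, p \in P & in_rect p i j /\ A i j = v p) ->
  {in P, forall p, `|c p - v p| <= del} ->
  \sum_(i < N) \sum_(j < N) (theta i j - A i j) ^+ 2
    <= 2 * \sum_(p <- P) rect_sqerr (grid_fun theta) p (c p) + 2 * del ^+ 2 *+ (N * N).
Proof.
move=> Pgrid hA hc.
pose E i j p := (grid_fun theta i j - c p) ^+ 2.
have pointwise (i j : 'I_N) : (theta i j - A i j) ^+ 2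
    <= 2 * \sum_(p <- P | in_rect p i j) E i j p + 2 * del ^+ 2.
  have [p pP [pij ->]] := hA i j.
  have Ele : E i j p <= \sum_(p <- P | in_rect p i j) E i j p.
    by apply: ler_sum_mem => // *; apply: sqr_ge0.
  have cv : (c p - v p) ^+ 2 <= del ^+ 2.
    have := hc p pP; have := normr_ge0 (c p - v p).
    by rewrite -(real_normK (num_real (c p - v p))); nra.
  move: Ele; rewrite /E grid_fun_ord; have := sqr_ge0 (theta i j - 2 * c p + v p); nra.
have total : \sum_(i < N) \sum_(j < N) \sum_(p <- P | in_rect p i j) E i j p
    = \sum_(p <- P) rect_sqerr (grid_fun theta) p (c p).
  under eq_bigr do under eq_bigr do rewrite big_mkcond.
  under eq_bigr do rewrite exchange_big /=.
  rewrite exchange_big /= big_seq [RHS]big_seq; apply: eq_bigr => p pP.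
  rewrite /rect_sqerr -sum_in_rect; try by case/andP: (Pgrid p pP).
  by apply: eq_bigr => i _; rewrite -big_mkcond.
apply: le_trans (ler_sum _ (fun i _ => ler_sum _ (fun j _ => pointwise i j))) _.
under eq_bigr do rewrite big_split /= -mulr_sumr sumr_const card_ord.
by rewrite big_split /= -mulr_sumr sumr_const card_ord total mulrnA.
Qed.

End Grid.

Section Patch.
Context {R : realType}.
Variables (n M m : nat) (L del : R).
Local Notation N := n.+1.

Definition level (k : nat) : R := - L + k%:R * del.

Lemma exists_level c : 0 < del -> 2 * L < M%:R * del -> `|c| <= L ->
  exists k : 'I_M, `|c - level k| <= del.
Proof.
move=> del0 LM; rewrite ler_norml => /andP[Lc cL].
have x0 : 0 <= (c + L) / del by apply: divr_ge0; [lra | exact: ltW].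
have /andP[lo hi] := truncn_itv x0.
have kM : (Num.truncn ((c + L) / del) < M)%N.
  by rewrite -(ltr_nat R); apply: le_lt_trans lo _; rewrite ltr_pdivrMr //; lra.
exists (Ordinal kM); rewrite /level /=.
rewrite ler_pdivlMr // in lo; rewrite ltr_pdivrMr // -natr1 mulrDl mul1r in hi.
by rewrite ler_norml; apply/andP; split; lra.
Qed.

Definition piece := ('I_N.+1 * 'I_N.+1 * 'I_N.+1 * 'I_N.+1 * 'I_M)%type.

Definition piece_rect (x : piece) := Rect x.1.1.1.1 x.1.1.1.2 x.1.1.2 x.1.2.

(* Overlaps between pieces are resolved by [pick]; uncovered entries are 0. *)
Definition patch (g : {ffun 'I_m -> piece}) : 'M[R]_N :=
  \matrix_(i, j) if [pick k | in_rect (piece_rect (g k)) i j] is Some k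
                 then level (g k).2 else 0.

Lemma exists_patch (P : seq rect) (kappa : rect -> 'I_M) :
  (size P <= m)%N -> {in P, forall p, near_square p && subrect p (grid_rect N)} ->
  (forall i j : 'I_N, has (fun p => in_rect p i j) P) ->
  exists g, forall i j : 'I_N,
    exists2 p, p \in P & in_rect p i j /\ patch g i j = level (kappa p).
Proof.
move=> Pm Pgrid Pcover.
pose code p : piece :=
  (inord (row_lo p), inord (row_hi p), inord (col_lo p), inord (col_hi p), kappa p).
have codeK p : p \in P -> piece_rect (code p) = p.
  move=> /Pgrid; case: p => a b c d /andP[/and4P[/= ab cd _ _] /and4P[/= _ bN _ dN]].
  by rewrite /piece_rect /= !inordK //; lia.
(* Unused slots hold the empty rectangle, which contains no entry. *)
pose p0 := Rect 0 0 0 0.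
pose g := [ffun k : 'I_m => nth (code p0) (map code P) k].
have gE (k : 'I_m) : (k < size P)%N -> g k = code (nth p0 P k).
  by move=> kP; rewrite ffunE (nth_map p0).
exists g => i j; rewrite mxE; case: pickP => [k|none].
  have [kP|Pk] := ltnP k (size P); last first.
    by rewrite ffunE nth_default ?size_map // /in_rect /= !inordK // ltn0 andbF.
  have pP : nth p0 P k \in P by apply: mem_nth.
  by rewrite gE // codeK // => pij; exists (nth p0 P k).
have /hasP[p pP pij] := Pcover i j.
have iP : (index p P < m)%N by apply: leq_trans Pm; rewrite index_mem.
move: (none (Ordinal iP)); rewrite gE ?index_mem //= nth_index // codeK //.
by rewrite pij.
Qed.

End Patch.

Lemma frob_dist_le {R : realType} m n (a b : 'M[R]_(m, n)) (e : R) : 0 <= e ->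
  \sum_i \sum_j (a i j - b i j) ^+ 2 <= e ^+ 2 -> frob_dist a b <= e.
Proof.
by move=> e0 h; apply: le_trans (ler_wsqrtr h) _; rewrite sqrtr_sqr ger0_norm.
Qed.

Lemma covering_number_le_size {R : realType} m n (A : set 'M[R]_(m, n)) e s :
  is_cover A e s -> (covering_number A e <= size s)%N.
Proof.
move=> As; rewrite /covering_number; case: pselect => [h|[]]; last first.
  by exists (size s); apply/asboolP; exists s.
by case: ex_minnP => k _; apply; apply/asboolP; exists s.
Qed.

Lemma covering_number_TVclass_le1 {R : realType} n (V L eps : R) :
  0 <= L -> L * n%:R <= eps -> (covering_number (@TVclass R n n V L) eps <= 1)%N.
Proof.
move=> L0 Ln; have Ln0 : 0 <= L * n%:R by rewrite mulr_ge0.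
apply: (@covering_number_le_size _ _ _ _ _ [:: 0]) => theta [_ linfL].
exists 0; rewrite ?mem_seq1 //; apply: frob_dist_le; first exact: le_trans Ln.
apply: (@le_trans _ _ (\sum_(i < n) \sum_(j < n) L ^+ 2)).
  apply: ler_sum => i _; apply: ler_sum => j _; rewrite mxE subr0 -real_normK ?num_real //.
  rewrite lerXn2r ?nnegrE ?normr_ge0 //.
  exact: le_trans (normr_le_linf _ _ theta i j) linfL.
rewrite !sumr_const !card_ord -mulrnA -mulr_natr natrM -expr2 -exprMn.
by rewrite lerXn2r ?nnegrE // (le_trans Ln0 Ln).
Qed.

Section Covering.
Context {R : realType}.
Context {n d M m : nat} {V L eps : R}.
Local Notation N := n.+1.
Hypotheses (V0 : 0 < V) (L0 : 0 < L) (eps0 : 0 < eps) (Nd : (N <= 2 ^ d)%N).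
Hypothesis levelsM : 4 * L * N%:R < M%:R * eps.
Hypothesis piecesm : 1 + 48 * d.+1%:R * (V ^+ 2 / eps ^+ 2) < m.+1%:R.

(* The piecewise-constant approximation error 8 t V and the rounding error
   2 N^2 del^2 are each eps^2 / 2. *)
Let t := eps ^+ 2 / (16 * V).
Let del := eps / (2 * N%:R).

Let t_gt0 : 0 < t. Proof. by rewrite divr_gt0 ?exprn_gt0 ?mulr_gt0. Qed.
Let del_gt0 : 0 < del. Proof. by rewrite divr_gt0 ?mulr_gt0. Qed.

Lemma exists_grid_fine_cover (theta : 'M[R]_N) : TV theta <= V ->
  exists2 P, fine_cover (grid_fun theta) t (grid_rect N) P & (size P <= m)%N.
Proof.
move=> tvV; have hd : (rows (grid_rect N) <= 2 ^ d)%N by rewrite /rows subn0.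
have [P [Pfine Psize]] :=
  exists_fine_cover (grid_fun theta) t d (grid_rect N) t_gt0 (near_square_grid N) hd hd.
exists P => //; rewrite rect_tv_grid in Psize.
rewrite -ltnS -(ltr_nat R); apply: le_lt_trans piecesm; rewrite -(ler_pM2r t_gt0).
have -> : (1 + 48 * d.+1%:R * (V ^+ 2 / eps ^+ 2)) * t = t + 3 * d.+1%:R * V.
  by rewrite /t; field; rewrite ?lt0r_neq0.
by apply: le_trans Psize _; rewrite lerD2l ler_wpM2l ?mulr_ge0.
Qed.

Lemma exists_fitted_levels (theta : 'M[R]_N) : linf theta <= L ->
  exists (c : rect -> R) (kappa : rect -> 'I_M), forall p,
    `|c p - level L del (kappa p)| <= del /\
    (near_square p -> rect_sqerr (grid_fun theta) p (c p)
                      <= 4 * rect_tv (grid_fun theta) p ^+ 2).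
Proof.
move=> linfL; have L0' := ltW L0.
have const p : exists c, `|c| <= L /\
    (near_square p -> rect_sqerr (grid_fun theta) p c <= 4 * rect_tv (grid_fun theta) p ^+ 2).
  have [nsq|_] := boolP (near_square p); last by exists 0; rewrite normr0.
  have [c ? ?] := exists_bounded_const _ L p L0' (grid_fun_bound _ _ linfL) nsq.
  by exists c.
have [c hc] := choice const.
have LM : 2 * L < M%:R * del.
  rewrite /del mulrA ltr_pdivlMr ?mulr_gt0 //.
  by have -> : 2 * L * (2 * N%:R) = 4 * L * N%:R by ring.
have [kappa hk] := choice (fun p => exists_level M L del (c p) del_gt0 LM (hc p).1).
by exists c, kappa => p; split; [exact: hk | exact: (hc p).2].
Qed.

Lemma TVclass_near_patch theta : @TVclass R N N V L theta ->
  exists g, frob_dist theta (patch n M m L del g) <= eps.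
Proof.
move=> [tvV linfL]; have [P Pfine Pm] := exists_grid_fine_cover theta tvV.
have [Pcover /allP Pall _] := Pfine.
have [c [kappa hck]] := exists_fitted_levels theta linfL.
have Pgrid : {in P, forall p, near_square p && subrect p (grid_rect N)}.
  by move=> p /Pall /and3P[-> -> _].
have [g hg] := exists_patch n M m L del P kappa Pm Pgrid
  (fun i j => Pcover i j (in_grid_rect _ i j)).
exists g; apply: frob_dist_le; first exact: ltW.
apply: le_trans (sqdist_le_piecewise theta Pgrid hg (fun p _ => (hck p).1)) _.
have := fine_cover_sqerr _ t _ P c (ltW t_gt0) Pfine
  (fun p pP => (hck p).2 (proj1 (andP (Pgrid p pP)))).
rewrite rect_tv_grid => err.
have <- : 2 * (4 * t * V) + 2 * del ^+ 2 *+ (N * N) = eps ^+ 2.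
  rewrite -[_ *+ (N * N)]mulr_natr natrM /t /del; field.
  by rewrite nat1r pnatr_eq0 (lt0r_neq0 V0).
apply: lerD => //; rewrite ler_pM2l //; apply: le_trans err _.
by apply: ler_wpM2l tvV; rewrite mulr_ge0 // ltW.
Qed.

Lemma covering_number_TVclass_le :
  (covering_number (@TVclass R N N V L) eps <= (N.+1 ^ 4 * M) ^ m)%N.
Proof.
set S := [seq patch n M m L del g | g <- enum {: {ffun 'I_m -> piece n M}}].
have -> : ((N.+1 ^ 4 * M) ^ m)%N = size S.
  by rewrite size_map -cardE card_ffun !card_prod !card_ord !expnS expn0 muln1 !mulnA.
apply: covering_number_le_size => theta /TVclass_near_patch[g hg].
by exists (patch n M m L del g) => //; apply: map_f; rewrite mem_enum.
Qed.

End Covering.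

Section Logarithms.
Context {R : realType}.

Lemma ln_nat_ge0 k : (0 < k)%N -> 0 <= ln (k%:R : R).
Proof. by move=> k0; rewrite ln_ge0 // ler1n. Qed.

Lemma ler_ln_nat a b : (0 < a)%N -> (a <= b)%N -> ln (a%:R : R) <= ln b%:R.
Proof. by move=> a0 ab; rewrite ler_ln ?posrE ?ler_nat ?ltr0n // (leq_trans a0). Qed.

Lemma ln_natM a b : (0 < a)%N -> (0 < b)%N -> ln ((a * b)%:R : R) = ln a%:R + ln b%:R.
Proof. by move=> a0 b0; rewrite natrM lnM ?posrE ?ltr0n. Qed.

Lemma ln_natX a k : (0 < a)%N -> ln ((a ^ k)%:R : R) = k%:R * ln a%:R.
Proof. by move=> a0; rewrite natrX lnXn ?ltr0n // mulr_natl. Qed.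

Lemma ln_nat_le_pow {c a M m} : (0 < a)%N -> (0 < M)%N -> (c <= (a ^ 4 * M) ^ m)%N ->
  ln (c%:R : R) <= m%:R * (4 * ln a%:R + ln M%:R).
Proof.
move=> a0 M0 cB; have B0 : (0 < a ^ 4 * M)%N by rewrite muln_gt0 expn_gt0 a0.
have -> : m%:R * (4 * ln a%:R + ln M%:R) = ln (((a ^ 4 * M) ^ m)%:R : R).
  by rewrite ln_natX // ln_natM ?expn_gt0 ?a0 // ln_natX.
have [->|c0] := posnP c; last exact: ler_ln_nat.
by rewrite ln0 // ln_nat_ge0 // expn_gt0 B0.
Qed.

End Logarithms.

Lemma ln_covering_number_TVclass_le {R : realType} {n} {V L eps : R} :
  (0 < n)%N -> 0 < V -> 0 < L -> 0 < eps ->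
  ln ((covering_number (@TVclass R n.+1 n.+1 V L) eps)%:R)
    <= (1 + 48 * ((trunc_log 2 n.+1)%:R + 2) * (V ^+ 2 / eps ^+ 2))
       * (8 * ln n.+1%:R + ln 2 + ln (1 + 2 * L * n.+1%:R / eps)).
Proof.
move=> n0 V0 L0 e0; set X := 2 * L * n.+1%:R / eps.
set B := 1 + _ * (V ^+ 2 / eps ^+ 2).
have X0 : 0 <= X by apply: divr_ge0; [rewrite !mulr_ge0 // ltW | exact: ltW].
have B0 : 0 <= B.
  rewrite /B addr_ge0 // mulr_ge0 //; first by rewrite mulr_ge0 // addr_ge0.
  by rewrite divr_ge0 ?sqr_ge0.
pose tl := trunc_log 2 n.+1; pose M := (Num.truncn (2 * X)).+1.
have Nd : (n.+1 <= 2 ^ tl.+1)%N by apply: ltnW; apply: trunc_log_ltn.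
have levels : 4 * L * n.+1%:R < M%:R * eps.
  have -> : 4 * L * n.+1%:R = 2 * X * eps by rewrite /X; field; rewrite lt0r_neq0.
  by rewrite ltr_pM2r // truncnS_gt.
have pieces : 1 + 48 * tl.+2%:R * (V ^+ 2 / eps ^+ 2) < (Num.truncn B).+1%:R.
  have -> : tl.+2%:R = tl%:R + 2 :> R by rewrite -addn2 natrD.
  exact: truncnS_gt.
have := ln_nat_le_pow (R := R) (isT : 0 < n.+2)%N (isT : 0 < M)%N
  (covering_number_TVclass_le V0 L0 e0 Nd levels pieces).
move/le_trans; apply; apply: ler_pM.
- exact: ler0n.
- by rewrite addr_ge0 ?mulr_ge0 ?ln_nat_ge0.
- by rewrite truncn_le.
have lnS : ln n.+2%:R <= 2 * ln (n.+1%:R : R).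
  by rewrite mulr_natl mulr2n -ln_natM // ler_ln_nat //; nia.
have lnM_le : ln M%:R <= ln 2 + ln (1 + X).
  rewrite -lnM ?posrE ?ltr0n ?ltr_wpDr // ler_ln ?posrE ?ltr0n ?mulr_gt0 ?ltr_wpDr //.
  have : (Num.truncn (2 * X))%:R <= 2 * X by rewrite truncn_le mulr_ge0.
  by rewrite /M -natr1; lra.
lra.
Qed.

Section Arithmetic.
Context {R : realFieldType}.

Lemma pieces_bound_le (l2 l K tl : R) : 0 < l2 -> l2 <= l -> 0 <= K -> tl * l2 <= l ->
  1 + 48 * (tl + 2) * K <= (1 + 144 / l2) * Num.max (K * l) 1.
Proof.
move=> l20 l2l K0 tll.
have tl3 : tl + 2 <= 3 * (l / l2).
  have : 1 <= l / l2 by rewrite ler_pdivlMr // mul1r.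
  have : tl <= l / l2 by rewrite ler_pdivlMr.
  lra.
have step : 48 * (tl + 2) * K <= 144 / l2 * (K * l).
  have -> : 144 / l2 * (K * l) = 48 * (3 * (l / l2)) * K by ring.
  by rewrite ler_wpM2r // ler_wpM2l.
have : 144 / l2 * (K * l) <= 144 / l2 * Num.max (K * l) 1.
  by apply: ler_wpM2l; [rewrite divr_ge0 // ltW | rewrite le_max lexx].
have : 1 <= Num.max (K * l) 1 by rewrite le_max lexx orbT.
rewrite mulrDl mul1r; lra.
Qed.

Lemma log_terms_le (l2 l Y : R) : 0 < l2 -> l2 <= l -> l2 <= Y ->
  8 * l + l2 + Y <= 10 / l2 * l * Y.
Proof.
move=> l20 l2l l2Y.
have [l0 Y0] : 0 <= l /\ 0 <= Y by split; apply: le_trans (ltW l20) _.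
have : 8 * l <= 8 * l * (Y / l2) by rewrite ler_peMr ?mulr_ge0 // ler_pdivlMr // mul1r.
have : 2 * Y <= 2 * Y * (l / l2) by rewrite ler_peMr ?mulr_ge0 // ler_pdivlMr // mul1r.
have -> : 10 / l2 * l * Y = 8 * l * (Y / l2) + 2 * Y * (l / l2) by ring.
lra.
Qed.

Lemma covering_exponent_le (l2 l Y K tl : R) :
  0 < l2 -> l2 <= l -> l2 <= Y -> 0 <= K -> 0 <= tl -> tl * l2 <= l ->
  (1 + 48 * (tl + 2) * K) * (8 * l + l2 + Y)
    <= (1 + 144 / l2) * (10 / l2) * l * Y * Num.max (K * l) 1.
Proof.
move=> l20 l2l l2Y K0 tl0 tll.
have -> : (1 + 144 / l2) * (10 / l2) * l * Y * Num.max (K * l) 1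
    = (1 + 144 / l2) * Num.max (K * l) 1 * (10 / l2 * l * Y) by ring.
apply: ler_pM; last exact: log_terms_le; last exact: pieces_bound_le.
  by rewrite addr_ge0 // !mulr_ge0 // addr_ge0.
by rewrite !addr_ge0 ?mulr_ge0 ?(ltW l20) // (le_trans (ltW l20)).
Qed.

End Arithmetic.

Lemma ln_covering_number_TVclass_le0 {R : realType} n (V L eps : R) :
  0 < L -> 0 < eps -> 2 * L * n%:R / eps < 1 ->
  ln ((covering_number (@TVclass R n n V L) eps)%:R : R) <= 0.
Proof.
move=> L0 eps0 small; apply: ln_le0; rewrite lern1 covering_number_TVclass_le1 ?ltW //.
by move: small; rewrite ltr_pdivrMr // mul1r; lra.
Qed.

Theorem proposition4p4 (R : realType) :
  exists C : R, 0 < C /\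
    forall (n : nat) (V L eps : R), (2 <= n)%N -> 0 < V -> 0 < L -> 0 < eps ->
      ln ((covering_number (@TVclass R n n V L) eps)%:R)
        <= C * ln (n%:R) * ln (1 + 2 * L * n%:R / eps)
             * Num.max (V ^+ 2 * ln (n%:R) / eps ^+ 2) 1.
Proof.
have l20 : 0 < ln 2 :> R by rewrite ln_gt0 // ltr1n.
pose C : R := (1 + 144 / ln 2) * (10 / ln 2).
have C0 : 0 < C by rewrite mulr_gt0 ?addr_gt0 ?divr_gt0.
exists C; split=> // -[//|n] V L eps n1 V0 L0 eps0; set X := 2 * L * _ / eps.
have X0 : 0 <= X by rewrite /X; apply: divr_ge0; [rewrite !mulr_ge0 // ltW | exact: ltW].
have l2l : ln 2 <= ln (n.+1%:R : R) by rewrite ler_ln_nat.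
have [small|large] := ltP X 1.
  apply: le_trans (ln_covering_number_TVclass_le0 n.+1 V L eps L0 eps0 small) _.
  have l0 : 0 <= ln (n.+1%:R : R) := le_trans (ltW l20) l2l.
  have Y0 : 0 <= ln (1 + X) by rewrite ln_ge0 // lerDl.
  have max0 : 0 <= Num.max (V ^+ 2 * ln n.+1%:R / eps ^+ 2) 1 by rewrite le_max ler01 orbT.
  exact: mulr_ge0 (mulr_ge0 (mulr_ge0 (ltW C0) l0) Y0) max0.
apply: le_trans (ln_covering_number_TVclass_le n1 V0 L0 eps0) _.
rewrite [V ^+ 2 * _ / _]mulrAC; apply: covering_exponent_le => //.
- by rewrite -/X ler_ln ?posrE; lra.
- by rewrite divr_ge0 ?sqr_ge0.
- by rewrite -ln_natX // ler_ln_nat ?expn_gt0 // trunc_logP.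
Qed.
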